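(* Let $1\le k\le n$. If $A\in H_n^k$ and $A=\pi U_{n,k}\sigma=\rho U_{n,k}\tau$ with $\pi,\sigma,\rho,\tau\in S_n$, then $\pi\sigma=\rho\tau$; hence $T_{n,k}:H_n^k\to S_n$, $T_{n,k}(\pi U_{n,k}\sigma)=\pi\sigma$, is well defined. Moreover $T_{n,k}$ preserves the action of $S_n\times S_n$, i.e. $$T_{n,k}(\pi A\sigma)=\pi\, T_{n,k}(A)\,\sigma\quad\text{for all }A\in H_n^k,\ \pi,\sigma\in S_n.$$
   Context: Permutations are composed as functions, and $\pi\in S_n$ is identified with the $n\times n$ permutation matrix whose $(i,j)$ entry is $1$ iff $i=\pi(j)$. $U_{n,k}$ is the $n\times n$ $(0,1)$-matrix whose upper left $k\times k$ block is upper triangular with all entries on and above the diagonal equal to $1$, whose upper right $k\times(n-k)$ block has all entries $1$, whose lower left $(n-k)\times k$ block is zero, and whose lower right block is $I_{n-k}$. $H_n^k=\{\pi U_{n,k}\sigma\mid \pi,\sigma\in S_n\}\subseteq GL_n(\mathbb{Z}_2)$. *)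

From HB Require Import structures.
From mathcomp Require Import all_boot all_order all_algebra all_fingroup.
Set Implicit Arguments. Unset Strict Implicit. Unset Printing Implicit Defensive.
Import GRing.Theory.
Local Open Scope ring_scope.

(* Function composition of permutations: permcomp p q = p \o q.
   (MathComp's group product (q * p)%g applies q first.) *)
Definition permcomp n (p q : 'S_n) : 'S_n := (q * p)%g.

Definition pmx n (p : 'S_n) : 'M['F_2]_n :=
  \matrix_(i, j) (if i == p j then 1 else 0).

Definition Umx n k : 'M['F_2]_n :=
  \matrix_(i, j) (if (i < k)%N then (if (i <= j)%N then 1 else 0)
                  else (if i == j then 1 else 0)).

Definition inH n k (A : 'M['F_2]_n) : Prop :=
  exists p s : 'S_n, A = pmx p *m Umx n k *m pmx s.

(* T_{n,k}: pick some decomposition A = pi U sigma and return pi \o sigma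
   (value 1 outside H_n^k, irrelevant). *)
Definition Tmx n k (A : 'M['F_2]_n) : 'S_n :=
  match [pick ps : 'S_n * 'S_n | A == pmx ps.1 *m Umx n k *m pmx ps.2] with
  | Some ps => permcomp ps.1 ps.2
  | None => 1%g
  end.
Arguments Umx : clear implicits.
Arguments inH : clear implicits.
Arguments Tmx : clear implicits.

From mathcomp Require Import all_boot all_order all_algebra all_fingroup.

Set Implicit Arguments.
Unset Strict Implicit.
Unset Printing Implicit Defensive.

Local Open Scope ring_scope.

(* Proof idea: the entry of pi U sigma at (pi x, sigma^-1 x) is the diagonal
   entry U x x <> 0.  Reading the same entry in rho U tau and using that U is
   upper triangular gives x <= g x for all x, where g = tau sigma^-1 pi^-1 rho.
   A permutation of {0, ..., n-1} moving no point downwards is the identity,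
   so pi sigma = rho tau.  Equivariance of T_{n,k} then
   follows by multiplying permutation matrices. *)

Lemma perm_ge_eq1 n (g : 'S_n) : (forall i : 'I_n, (i <= g i)%N) -> g = 1%g.
Proof.
move=> ge_g.
have sum_g : (\sum_(i : 'I_n) (g i : nat) = \sum_(i : 'I_n) (i : nat))%N.
  by rewrite [RHS](reindex_inj (@perm_inj _ g)).
have sum_diff0 : (\sum_(i : 'I_n) (g i - i) = 0)%N.
  apply/eqP; rewrite -(eqn_add2r (\sum_(i : 'I_n) (i : nat))) add0n -big_split /=.
  by rewrite -sum_g; apply/eqP/eq_bigr => i _; rewrite subnK.
apply/permP => i; rewrite perm1; apply/val_inj/eqP.
move/eqP: sum_diff0; rewrite sum_nat_eq0 => /forallP/(_ i) /=.
by rewrite subn_eq0 eqn_leq ge_g => ->.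
Qed.

Lemma pmx_perm_mx n (p : 'S_n) : pmx p = perm_mx p^-1.
Proof.
apply/matrixP => i j; rewrite !mxE.
have -> : (i == p j) = ((p^-1)%g i == j).
  by apply/eqP/eqP => [->|<-]; rewrite ?permK ?permKV.
by case: eqP.
Qed.

Lemma pmxM n (p q : 'S_n) : pmx p *m pmx q = pmx (permcomp p q).
Proof. by rewrite !pmx_perm_mx -perm_mxM /permcomp invMg. Qed.

Lemma pmx_mul_pmxE n (p s : 'S_n) (M : 'M['F_2]_n) i j :
  (pmx p *m M *m pmx s) i j = M ((p^-1)%g i) (s j).
Proof.
rewrite !pmx_perm_mx -row_permE -[(s^-1)%g]invgK -col_permE.
by rewrite !mxE invgK.
Qed.

Section UpperTriangular.

Variables (n : nat) (U : 'M['F_2]_n).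
Hypothesis U_diag : forall i, U i i != 0.
Hypothesis U_upper : forall i j, U i j != 0 -> (i <= j)%N.

Lemma pmx_sandwich_permcomp (p s r t : 'S_n) :
  pmx p *m U *m pmx s = pmx r *m U *m pmx t -> permcomp p s = permcomp r t.
Proof.
move=> E.
have le_rp_ts x : ((r^-1)%g (p x) <= t ((s^-1)%g x))%N.
  apply: U_upper; have := congr1 (fun M : 'M['F_2]_n => M (p x) ((s^-1)%g x)) E.
  by rewrite /= !pmx_mul_pmxE permK permKV => <-.
have g1 : (r * p^-1 * s^-1 * t = 1)%g.
  apply: perm_ge_eq1 => z; rewrite !permM.
  by have := le_rp_ts ((p^-1)%g (r z)); rewrite permKV permK.
apply/eqP; rewrite eq_mulVg1 invMg -(conjg_eq1 _ (r^-1)%g) /conjg invgK !mulgA.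
by rewrite mulgK g1.
Qed.

End UpperTriangular.

Lemma Umx_diag n k (i : 'I_n) : Umx n k i i != 0.
Proof. by rewrite mxE leqnn eqxx; case: ifP. Qed.

Lemma Umx_upper n k (i j : 'I_n) : Umx n k i j != 0 -> (i <= j)%N.
Proof. by rewrite mxE; case: ifP => _; case: ifP => // /eqP ->. Qed.

Lemma TmxE n k (M : 'M['F_2]_n) (a b : 'S_n) :
  M = pmx a *m Umx n k *m pmx b -> Tmx n k M = permcomp a b.
Proof.
move=> defM; rewrite /Tmx; case: pickP => [ps /eqP defM' | none].
  apply: (pmx_sandwich_permcomp (@Umx_diag n k) (@Umx_upper n k)).
  by rewrite -defM'.
by have := none (a, b); rewrite /= defM eqxx.
Qed.

Theorem mainTheorem3 (n k : nat) (hk1 : (1 <= k)%N) (hkn : (k <= n)%N) :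
  (forall p s r t : 'S_n,
      pmx p *m Umx n k *m pmx s = pmx r *m Umx n k *m pmx t ->
      permcomp p s = permcomp r t)
  /\
  (forall (A : 'M['F_2]_n) (p s : 'S_n), inH n k A ->
      Tmx n k (pmx p *m A *m pmx s) = permcomp p (permcomp (Tmx n k A) s)).
Proof.
split=> [p s r t|A p s [a [b defA]]].
  exact: pmx_sandwich_permcomp (@Umx_diag n k) (@Umx_upper n k) p s r t.
rewrite (TmxE defA) (@TmxE n k _ (permcomp p a) (permcomp b s)).
  by rewrite /permcomp !mulgA.
by rewrite defA -!mulmxA pmxM !mulmxA pmxM.
Qed.
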